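(* Under the standing assumptions below, the solution operator $S:V^*\to V$, $u\mapsto y$, of the variational inequality (VI) is pointwise-a.e. convex: for all $u_1,u_2\in V^*$ and all $\lambda\in[0,1]$, $$S(\lambda u_1+(1-\lambda)u_2)\le\lambda S(u_1)+(1-\lambda)S(u_2)\quad\mu\text{-a.e. in }\Omega.$$
   Context: Standing assumptions: (i) $(\Omega,\Sigma,\mu)$ is a complete finite measure space with real Lebesgue spaces $L^p(\Omega)$, $1\le p\le\infty$. (ii) $V$ is a real separable Hilbert space with $V\subset L^q(\Omega)$, the embedding $V\hookrightarrow L^q(\Omega)$ continuous, compact and dense, for a fixed $q\in[2,\infty]$; moreover $[v]_{a_1}^{a_2}:=\min(a_2,\max(a_1,v))$ (pointwise a.e.) belongs to $V$ for all $v\in V$ and all $a_1,a_2\in[-\infty,\infty]$ with $a_1\le0\le a_2$. (iii) $U:=L^s(\Omega)$ with fixed $s\in(1,\infty)$, $s\ge q'$ (where $1/q+1/q'=1$), identified with a subset of $V^*$ via $L^s(\Omega)\cong L^{s'}(\Omega)^*\hookrightarrow L^q(\Omega)^*\hookrightarrow V^*$. (iv) $A:V\to V^*$ is linear and continuous with $\langle Av,v\rangle_V\ge c\|v\|_V^2$ for all $v\in V$ and some $c>0$, and $\min(\langle Av,[v]_{a_1}^{a_2}\rangle_V,\langle A[v]_{a_1}^{a_2},v\rangle_V)\ge\langle A[v]_{a_1}^{a_2},[v]_{a_1}^{a_2}\rangle_V$ for all $v\in V$ and all $a_1\le0\le a_2$ in $[-\infty,\infty]$. (v) $f:\mathbb{R}\to\mathbb{R}$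 is nondecreasing, globally Lipschitz and concave, identified with $f:V\to V^*$, $\langle f(v),w\rangle_V:=(f(v),w)_{L^2(\Omega)}$. (vi) $K\subset V$ is nonempty, closed, convex with: $v\in K$, $z\in V$ $\Rightarrow$ $v+\max(0,z)\in K$; and $v_1,v_2\in K\Rightarrow\min(v_1,v_2)\in K$. (VI): for $u\in V^*$ find $y\in K$ with $\langle Ay+f(y)-u,v-y\rangle_V\ge0$ for all $v\in K$. It is known that (VI) has a unique solution $S(u)$ for every $u\in V^*$ and that $S:V^*\to V$ is globally Lipschitz. *)

From HB Require Import structures.
From mathcomp Require Import all_boot all_order all_algebra.
From mathcomp Require Import all_classical all_reals all_analysis.
Set Implicit Arguments. Unset Strict Implicit. Unset Printing Implicit Defensive.
Import Order.TTheory GRing.Theory Num.Theory.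
Import numFieldNormedType.Exports.
Local Open Scope classical_set_scope.
Local Open Scope ring_scope.

Section Defs.
Context {R : realType}.

(* pointwise truncation [t]_{a1}^{a2} = min(a2, max(a1, t)) with a1,a2 in
   [-oo,+oo]; the value is real whenever a1 <= 0 <= a2. *)
Definition clamp (a1 a2 : \bar R) (t : R) : R :=
  fine (Order.min a2 (Order.max a1 t%:E)).

Definition hilbert_inner (V : completeNormedModType R) (ip : V -> V -> R) :=
  [/\ forall a v w z, ip (a *: v + w) z = a * ip v z + ip w z,
      forall v w, ip v w = ip w v &
      forall v, `|v| = Num.sqrt (ip v v)].

Definition separable (V : completeNormedModType R) :=
  exists D : set V, countable D /\ closure D = setT.

Definition dual_elt (V : completeNormedModType R) (u : V -> R) :=
  (forall a v w, u (a *: v + w) = a * u v + u w) /\ continuous u.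

Context {d : measure_display} {T : measurableType d}.
Variable mu : {finite_measure set T -> \bar R}.

Definition inLq (q : \bar R) (g : T -> R) :=
  measurable_fun setT g /\ ('N[mu]_q[EFin \o g] < +oo)%E.

Definition Lq_embedding (q : \bar R) (V : completeNormedModType R)
    (iota : V -> T -> R) :=
  (forall v, inLq q (iota v)) /\
  [/\ forall a v w, iota (a *: v + w) = (fun x => a * iota v x + iota w x) %[ae mu],
      forall v w, iota v = iota w %[ae mu] -> v = w,
      (exists C : R, forall v, ('N[mu]_q[EFin \o iota v] <= (C * `|v|)%R%:E)%E),
      (forall (vn : nat -> V) (B : R), (forall n, `|vn n| <= B) ->
         exists (phi : nat -> nat) (g : T -> R),
           {homo phi : m n / (m < n)%N} /\ inLq q g /\
           forall e : R, 0 < e -> exists N : nat, forall n, (N <= n)%N ->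
             ('N[mu]_q[EFin \o (fun x => (iota (vn (phi n)) x - g x)%R)] < e%:E)%E) &
      forall g, inLq q g -> forall e : R, 0 < e -> exists v,
        ('N[mu]_q[EFin \o (fun x => (g x - iota v x)%R)] < e%:E)%E].

Definition trunc_closed (V : completeNormedModType R) (iota : V -> T -> R) :=
  forall (v : V) (a1 a2 : \bar R), (a1 <= 0)%E -> (0 <= a2)%E ->
    exists w : V, iota w = (fun x => clamp a1 a2 (iota v x)) %[ae mu].

(* (iv): A : V -> V^* given by the bilinear form a v w = <A v, w>_V. *)
Definition A_hyp (V : completeNormedModType R) (iota : V -> T -> R)
    (a : V -> V -> R) :=
  [/\ forall s v w z, a (s *: v + w) z = s * a v z + a w z,
      forall s v w z, a z (s *: v + w) = s * a z v + a z w,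
      (exists M : R, forall v w, `|a v w| <= M * `|v| * `|w|),
      (exists c : R, 0 < c /\ forall v, a v v >= c * `|v| ^+ 2) &
      forall (v w : V) (a1 a2 : \bar R), (a1 <= 0)%E -> (0 <= a2)%E ->
        iota w = (fun x => clamp a1 a2 (iota v x)) %[ae mu] ->
        Order.min (a v w) (a w v) >= a w w].

Definition f_hyp (f : R -> R) :=
  [/\ {homo f : x y / x <= y},
      (exists L : R, forall x y, `|f x - f y| <= L * `|x - y|) &
      forall x y l, 0 <= l <= 1 -> l * f x + (1 - l) * f y <= f (l * x + (1 - l) * y)].

Definition K_hyp (V : completeNormedModType R) (iota : V -> T -> R)
    (K : set V) :=
  [/\ K !=set0, closed K,
      forall v w l, K v -> K w -> 0 <= l <= 1 -> K (l *: v + (1 - l) *: w),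
      forall v z w, K v -> iota w = (fun x => Order.max 0 (iota z x)) %[ae mu] ->
        K (v + w) &
      forall v1 v2 w, K v1 -> K v2 ->
        iota w = (fun x => Order.min (iota v1 x) (iota v2 x)) %[ae mu] -> K w].

(* y solves (VI) with right-hand side u:
   y in K and <A y + f(y) - u, v - y> >= 0 for all v in K, where
   <f(y), w> = \int f(y) w dmu. *)
Definition VI_sol (V : completeNormedModType R) (iota : V -> T -> R)
    (a : V -> V -> R) (f : R -> R) (K : set V) (u : V -> R) (y : V) :=
  K y /\ forall v, K v ->
    0 <= a y (v - y) + Rintegral mu setT (fun x => f (iota y x) * iota (v - y) x)
         - u (v - y).

End Defs.

From HB Require Import structures.
From mathcomp Require Import all_boot all_order all_algebra.
From mathcomp Require Import all_classical all_reals all_analysis.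
From mathcomp Require Import measurable_realfun.
From mathcomp Require Import ring lra.
Import Order.TTheory GRing.Theory Num.Theory.
Import numFieldNormedType.Exports.
Local Open Scope classical_set_scope.
Local Open Scope ring_scope.
Set Implicit Arguments. Unset Strict Implicit.

(* Put z := l y1 + (1 - l) y2 and w := (y - z)^+.  By the lattice properties
   of K, y1 + w, y2 + w and y - w = min(y, z) are admissible test functions
   for the inequalities of y1, y2 and y respectively; the combination with
   weights l, 1 - l and 1 gives
     c |w|^2 <= <A w, w> <= <A (y - z), w>
             <= \int (l f(y1) + (1 - l) f(y2) - f(y)) w <= 0,
   the second step by the truncation property of A and the last because f is
   concave and nondecreasing, so the integrand is nonpositive where w > 0.
   Hence w = 0, i.e. y <= z a.e. *)

Section linear_form.
Context (R : comNzRingType) (V : lmodType R).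

Definition linear_form (u : V -> R) := forall s v w, u (s *: v + w) = s * u v + u w.

Variable u : V -> R.
Hypothesis uL : linear_form u.

Lemma linear_form0 : u 0 = 0.
Proof.
by have := uL 1 0 0; rewrite scale1r addr0 mul1r => /esym/eqP; rewrite -subr_eq0 addrK => /eqP.
Qed.

Lemma linear_formN v : u (- v) = - u v.
Proof. by have := uL (-1) v 0; rewrite scaleN1r addr0 linear_form0 addr0 mulN1r. Qed.

Lemma linear_formB v w : u (v - w) = u v - u w.
Proof. by have := uL (-1) w v; rewrite scaleN1r mulN1r addrC => ->; rewrite addrC. Qed.

Lemma linear_form_conv l v w : u (l *: v + (1 - l) *: w) = l * u v + (1 - l) * u w.
Proof. by rewrite uL -[(1 - l) *: w]addr0 uL linear_form0 addr0. Qed.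

Lemma linear_form_comb (u' : V -> R) k k' : linear_form u' ->
  linear_form (fun v => k * u v + k' * u' v).
Proof. by move=> u'L s v w; rewrite uL u'L; ring. Qed.

End linear_form.

Section ae_linear.
Context (R : realType) (d : measure_display) (T : measurableType d).
Context (mu : {measure set T -> \bar R}) (V : lmodType R).

Definition ae_linear (g : V -> T -> R) :=
  forall s v w, g (s *: v + w) = (fun x => s * g v x + g w x) %[ae mu].

Variable g : V -> T -> R.
Hypothesis gL : ae_linear g.

Lemma ae_linear0 : \forall x \ae mu, g 0 x = 0.
Proof. by apply: filterS (gL 1 0 0) => x /(_ I); rewrite scale1r addr0; lra. Qed.

Lemma ae_linearN v : \forall x \ae mu, g (- v) x = - g v x.
Proof.
apply: filterS2 (gL (-1) v 0) ae_linear0 => x /(_ I).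
by rewrite scaleN1r addr0; lra.
Qed.

Lemma ae_linearB v w : \forall x \ae mu, g (v - w) x = g v x - g w x.
Proof. by apply: filterS (gL (-1) w v) => x /(_ I); rewrite scaleN1r addrC; lra. Qed.

Lemma ae_linear_conv l v w :
  \forall x \ae mu, g (l *: v + (1 - l) *: w) x = l * g v x + (1 - l) * g w x.
Proof.
apply: filterS3 (gL l v ((1 - l) *: w)) (gL (1 - l) w 0) ae_linear0.
by move=> x /(_ I) + /(_ I); rewrite addr0; lra.
Qed.

End ae_linear.

Lemma clamp0y (R : realType) (t : R) : clamp 0%E +oo%E t = Num.max 0 t.
Proof. by rewrite /clamp minye -EFin_max. Qed.

Lemma minrE_subr_max0 (R : realDomainType) (x y : R) :
  Num.min x y = x - Num.max 0 (x - y).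
Proof. by case: (lerP x y); case: ler0P; lra. Qed.

Lemma nondecreasing_mul_max0_le0 (R : realDomainType) (f : R -> R) (c m t : R) :
  {homo f : x y / x <= y} -> c <= f m -> (c - f t) * Num.max 0 (t - m) <= 0.
Proof.
move=> fnd cm; case: (ler0P (t - m)) => [_|tm]; first by rewrite mulr0.
rewrite mulr_le0_ge0 ?subr_le0 ?(le_trans cm) ?fnd //; lra.
Qed.

Lemma Lfun_measurable (R : realType) (d : measure_display) (T : measurableType d)
    (mu : {measure set T -> \bar R}) (p : \bar R) (g : T -> R) :
  g \in Lfun mu p -> measurable_fun setT g.
Proof. by move/sub_Lfun_mfun; rewrite inE. Qed.

Lemma inLq_Lfun2 (R : realType) (d : measure_display) (T : measurableType d)
    (mu : {finite_measure set T -> \bar R}) (q : \bar R) (g : T -> R) :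
  (2%:E <= q)%E -> inLq mu q g -> g \in Lfun mu 2%:E.
Proof.
move=> q2 [mg ng].
have q1 : (1 <= q)%E by apply: le_trans q2; rewrite lee_fin ler1n.
apply: (Lfun_subset _ q1 _ q2); [by rewrite lee_fin ler1n|exact: fin_num_measure|].
by rewrite inE; apply/andP; split; rewrite inE.
Qed.

Lemma Lipschitz_comp_mul_Lfun1 (R : realType) (d : measure_display)
    (T : measurableType d) (mu : {finite_measure set T -> \bar R})
    (f : R -> R) (L : R) (g h : T -> R) :
  measurable_fun setT f -> (forall s t, `|f s - f t| <= L * `|s - t|) ->
  g \in Lfun mu 2%:E -> h \in Lfun mu 2%:E ->
  (fun x => f (g x) * h x) \in Lfun mu 1.
Proof.
move=> mf fL g2 h2; apply/Lfun1_integrable.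
have h1 : h \in Lfun mu 1 by apply: Lfun_subset12 h2; exact: fin_num_measure.
have gh1 := Lfun2_mul_Lfun1 g2 h2.
have /Lfun1_integrable dom : (fun x => `|f 0| * `|h x| + `|L| * `|g x * h x|) \in Lfun mu 1.
  by apply: (rpredD (rpredZ _ (Lfun_norm h1)) (rpredZ _ (Lfun_norm gh1))).
apply: le_integrable dom => //.
  apply/measurable_EFinP/measurable_funM; last exact: Lfun_measurable h2.
  exact: measurableT_comp mf (Lfun_measurable g2).
move=> x _; rewrite /= !lee_fin [X in _ <= X]ger0_norm ?addr_ge0 ?mulr_ge0 //.
have fg : `|f (g x)| <= `|f 0| + `|L| * `|g x|.
  rewrite -[f (g x)](subrKC (f 0)) (le_trans (ler_normD _ _)) // lerD2l.
  by rewrite (le_trans (fL _ _)) // subr0 ler_wpM2r ?ler_norm.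
by rewrite normrM [`|g x * _|]normrM mulrA -mulrDl ler_wpM2r.
Qed.

Section ae_Rintegral.
Context (R : realType) (d : measure_display) (T : measurableType d).
Context (mu : {measure set T -> \bar R}).

Lemma ae_eq_Rintegral (F G : T -> R) :
  measurable_fun setT F -> measurable_fun setT G ->
  (\forall x \ae mu, F x = G x) -> Rintegral mu setT F = Rintegral mu setT G.
Proof.
move=> mF mG FG; congr fine; apply: ae_eq_integral => //; try exact/measurable_EFinP.
by apply: filterS FG => x /= ->.
Qed.

Lemma ae_le_Rintegral (F G : T -> R) :
  mu.-integrable setT (EFin \o F) -> mu.-integrable setT (EFin \o G) ->
  (\forall x \ae mu, F x <= G x) -> Rintegral mu setT F <= Rintegral mu setT G.
Proof.
move=> iF iG FG; rewrite -subr_ge0 -RintegralB //.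
have mGF : measurable_fun setT (fun x => G x - F x).
  apply: measurable_funB; apply/measurable_EFinP.
    exact: (integrableP _ _ _ iG).1.
  exact: (integrableP _ _ _ iF).1.
rewrite (@ae_eq_Rintegral _ (fun x => Num.max 0 (G x - F x))) //.
- by apply: Rintegral_ge0 => x _; rewrite le_max lexx.
- exact: measurable_maxr.
- by apply: filterS FG => x; rewrite -subr_ge0 => /max_idPr.
Qed.

End ae_Rintegral.

Lemma VI_sol_add_ge0 (R : realType) (d : measure_display) (T : measurableType d)
    (mu : {finite_measure set T -> \bar R}) (V : completeNormedModType R)
    (iota : V -> T -> R) (a : V -> V -> R) (f : R -> R) (K : set V)
    (u : V -> R) (y w : V) :
  VI_sol mu iota a f K u y -> K (y + w) ->
  0 <= a y w + Rintegral mu setT (fun x => f (iota y x) * iota w x) - u w.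
Proof. by case=> _ VIy /VIy; rewrite [y + w]addrC addrK. Qed.

Section VI_convexity.
Context (R : realType) (d : measure_display) (T : measurableType d).
Context (mu : {finite_measure set T -> \bar R}) (q : \bar R).
Context (V : completeNormedModType R) (iota : V -> T -> R) (a : V -> V -> R).
Context (f : R -> R) (K : set V).
Hypothesis q2 : (2%:E <= q)%E.
Hypothesis iota_Lq : forall v, inLq mu q (iota v).
Hypothesis iotaL : ae_linear mu iota.
Hypothesis aL : forall w, linear_form (a^~ w).
Hypothesis aR : forall v, linear_form (a v).
Variables (c : R) (L : R).
Hypothesis c_gt0 : 0 < c.
Hypothesis a_coercive : forall v, c * `|v| ^+ 2 <= a v v.
Hypothesis a_max0 : forall v w,
  iota w = (fun x => Num.max 0 (iota v x)) %[ae mu] -> a w w <= a v w.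
Hypothesis f_nd : {homo f : x y / x <= y}.
Hypothesis f_Lip : forall s t, `|f s - f t| <= L * `|s - t|.
Hypothesis f_concave : forall s t l, 0 <= l <= 1 ->
  l * f s + (1 - l) * f t <= f (l * s + (1 - l) * t).
Hypothesis K_conv : forall v w l, K v -> K w -> 0 <= l <= 1 -> K (l *: v + (1 - l) *: w).
Hypothesis K_add_max0 : forall v z w, K v ->
  iota w = (fun x => Num.max 0 (iota z x)) %[ae mu] -> K (v + w).
Hypothesis K_min : forall v1 v2 w, K v1 -> K v2 ->
  iota w = (fun x => Num.min (iota v1 x) (iota v2 x)) %[ae mu] -> K w.

Variables (u1 u2 : V -> R) (l : R) (y1 y2 y : V).
Hypotheses (u1L : linear_form u1) (u2L : linear_form u2) (l01 : 0 <= l <= 1).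
Hypothesis VI1 : VI_sol mu iota a f K u1 y1.
Hypothesis VI2 : VI_sol mu iota a f K u2 y2.
Hypothesis VIl : VI_sol mu iota a f K (fun v => l * u1 v + (1 - l) * u2 v) y.

Let z := l *: y1 + (1 - l) *: y2.
Variable w : V.
Hypothesis w_max0 : iota w = (fun x => Num.max 0 (iota (y - z) x)) %[ae mu].

Let F v x := f (iota v x) * iota w x.

Let iota_measurable v : measurable_fun setT (iota v).
Proof. by case: (iota_Lq v). Qed.

Let f_measurable : measurable_fun setT f.
Proof. exact: nondecreasing_measurable. Qed.

Let F_Lfun1 v : F v \in Lfun mu 1.
Proof. by apply: (Lipschitz_comp_mul_Lfun1 f_measurable f_Lip); rewrite ?(inLq_Lfun2 q2). Qed.

Let F_integrable v : mu.-integrable setT (EFin \o F v).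
Proof. exact/Lfun1_integrable. Qed.

Lemma VI_sol_sub_le0 u y0 : linear_form u -> VI_sol mu iota a f K u y0 ->
  K (y0 - w) -> a y0 w + Rintegral mu setT (F y0) - u w <= 0.
Proof.
move=> uL [_ VIy] /VIy; rewrite [y0 - w - y0]addrAC subrr add0r.
rewrite (linear_formN (aR y0)) (linear_formN uL).
have mF : measurable_fun setT (F y0).
  by apply/measurable_EFinP; exact: (integrableP _ _ _ (F_integrable y0)).1.
rewrite (@ae_eq_Rintegral _ _ _ _ _ (fun x => -1 * F y0 x)) //; last first.
  by apply: filterS (ae_linearN iotaL w) => x ->; rewrite /F mulN1r mulrN.
- exact: measurable_funM.
- by apply: measurable_funM => //; exact: measurableT_comp.
rewrite (RintegralZl _ measurableT (F_integrable y0)); lra.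
Qed.

Let Kz : K z. Proof. by apply: K_conv; [case: VI1|case: VI2|]. Qed.

Let K_sub_w : K (y - w).
Proof.
apply: (K_min (v1 := y) (v2 := z)); [by case: VIl|exact: Kz|].
apply: filterS3 w_max0 (ae_linearB iotaL y w) (ae_linearB iotaL y z).
by move=> x /(_ I) wE yw yz _; rewrite yw wE yz minrE_subr_max0.
Qed.

Lemma a_sub_conv_le :
  a (y - z) w <= l * Rintegral mu setT (F y1) + (1 - l) * Rintegral mu setT (F y2)
                 - Rintegral mu setT (F y).
Proof.
have t1 : 0 <= a y1 w + Rintegral mu setT (F y1) - u1 w.
  exact: VI_sol_add_ge0 VI1 (K_add_max0 (proj1 VI1) w_max0).
have t2 : 0 <= a y2 w + Rintegral mu setT (F y2) - u2 w.
  exact: VI_sol_add_ge0 VI2 (K_add_max0 (proj1 VI2) w_max0).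
have ty := VI_sol_sub_le0 (linear_form_comb u1L l (1 - l) u2L) VIl K_sub_w.
have aB : a (y - z) w = a y w - a z w := linear_formB (aL w) y z.
have aZ : a z w = l * a y1 w + (1 - l) * a y2 w := linear_form_conv (aL w) l y1 y2.
have /andP[l0 l1] := l01.
have := mulr_ge0 l0 t1; have : 0 <= 1 - l by rewrite subr_ge0.
move/mulr_ge0/(_ t2); rewrite aB aZ; lra.
Qed.

Lemma conv_Rintegral_le :
  l * Rintegral mu setT (F y1) + (1 - l) * Rintegral mu setT (F y2)
    <= Rintegral mu setT (F y).
Proof.
have Fcomb : (fun x => l * F y1 x + (1 - l) * F y2 x) \in Lfun mu 1.
  by apply: (rpredD (rpredZ _ (F_Lfun1 y1)) (rpredZ _ (F_Lfun1 y2))).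
rewrite -(RintegralZl _ measurableT (F_integrable y1)).
rewrite -(RintegralZl _ measurableT (F_integrable y2)).
rewrite -RintegralD //; try exact/Lfun1_integrable/rpredZ.
apply: ae_le_Rintegral => //; first exact/Lfun1_integrable.
apply: filterS3 (ae_linear_conv iotaL l y1 y2) (ae_linearB iotaL y z) w_max0.
move=> x y12 yz /(_ I) wE; rewrite /F wE yz y12.
have := nondecreasing_mul_max0_le0 (iota y x) f_nd (f_concave (iota y1 x) (iota y2 x) l01).
lra.
Qed.

Lemma max0_sub_conv_eq0 : w = 0.
Proof.
have : c * `|w| ^+ 2 <= 0.
  apply: le_trans (a_coercive w) _; apply: le_trans (a_max0 w_max0) _.
  by apply: le_trans a_sub_conv_le _; rewrite subr_le0 conv_Rintegral_le.
rewrite pmulr_rle0 // le_eqVlt ltNge sqr_ge0 orbF sqrf_eq0 normr_eq0.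
by move/eqP.
Qed.

Lemma VI_sol_le_conv :
  \forall x \ae mu, iota y x <= l * iota y1 x + (1 - l) * iota y2 x.
Proof.
have yz_le0 : \forall x \ae mu, iota (y - z) x <= 0.
  move: w_max0; rewrite max0_sub_conv_eq0 => w0.
  apply: filterS2 w0 (ae_linear0 iotaL) => x /(_ I) wE i0.
  by rewrite -i0 wE le_max lexx orbT.
apply: filterS3 yz_le0 (ae_linearB iotaL y z) (ae_linear_conv iotaL l y1 y2).
by move=> x yz yzE zE; rewrite -zE -subr_le0 -yzE.
Qed.

End VI_convexity.

Theorem mainTheorem8 (R : realType) (d : measure_display) (T : measurableType d)
    (mu : {finite_measure set T -> \bar R}) (q : \bar R)
    (V : completeNormedModType R) (ip : V -> V -> R) (iota : V -> T -> R)
    (a : V -> V -> R) (f : R -> R) (K : set V) :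
  measure_is_complete mu ->
  (2%:E <= q)%E ->
  hilbert_inner ip -> separable V ->
  Lq_embedding mu q iota -> trunc_closed mu iota ->
  A_hyp mu iota a -> f_hyp f -> K_hyp mu iota K ->
  forall (u1 u2 : V -> R) (l : R) (y1 y2 y : V),
    dual_elt u1 -> dual_elt u2 -> 0 <= l <= 1 ->
    VI_sol mu iota a f K u1 y1 -> VI_sol mu iota a f K u2 y2 ->
    VI_sol mu iota a f K (fun v => l * u1 v + (1 - l) * u2 v) y ->
    \forall x \ae mu, iota y x <= l * iota y1 x + (1 - l) * iota y2 x.
Proof.
move=> _ q2 _ _ [iota_Lq [iotaL _ _ _ _]] trunc [aL aR _ [c [c0 coer]] atr]
  [fnd [L fLip] fconc] [_ _ Kconv Kmax Kmin] u1 u2 l y1 y2 y [u1L _] [u2L _]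
  l01 VI1 VI2 VIl.
have max0E v w : iota w = (fun x => clamp 0%E +oo%E (iota v x)) %[ae mu] <->
    iota w = (fun x => Num.max 0 (iota v x)) %[ae mu].
  by split; apply: filterS => x; rewrite clamp0y.
have a_max0 v w : iota w = (fun x => Num.max 0 (iota v x)) %[ae mu] -> a w w <= a v w.
  move=> /max0E /(atr v w _ _ (lexx _) (leey _)).
  by rewrite le_min => /andP[].
have [w /max0E w_max0] :=
  trunc (y - (l *: y1 + (1 - l) *: y2)) 0%E +oo%E (lexx _) (leey _).
exact: (VI_sol_le_conv q2 iota_Lq iotaL (fun z s v w => aL s v w z)
  (fun z s v w => aR s v w z) c0 coer a_max0 fnd fLip fconc Kconv Kmax Kmin
  u1L u2L l01 VI1 VI2 VIl w_max0).
Qed.
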